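(* Let $(X,d)$ be a compact metric space and $\omega:\Lambda\times X\to X$ an IFS with compact metric parameter space $\Lambda$. If $\omega$ has the finite shadowing property, then $\omega$ has the shadowing property.
   Context: Write $\omega_\lambda=\omega(\lambda,\cdot)$, with $\omega$ continuous. A chain is a sequence $\{y_k\}_{k\ge0}$ in $X$ such that for each $k\ge1$ there is $\lambda_k\in\Lambda$ with $y_k=\omega_{\lambda_k}(y_{k-1})$. A (finite or infinite) sequence $\{x_k\}$ is a $\delta$-chain if for each $k\ge1$ there is $\lambda_k\in\Lambda$ with $d(x_k,\omega_{\lambda_k}(x_{k-1}))\le\delta$. Shadowing property: for every $\varepsilon>0$ there is $\delta>0$ such that for every infinite $\delta$-chain $\{x_k\}_{k\ge0}$ there is a chain $\{y_k\}$ with $d(x_k,y_k)<\varepsilon$ for all $k\ge0$. Finite shadowing property: for every $\varepsilon>0$ there is $\delta>0$ such that for every finite $\delta$-chain $\{x_0,\dots,x_n\}$ there is a chain $\{y_k\}$ with $d(x_k,y_k)<\varepsilon$ for $k=0,\dots,n$. *)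

From HB Require Import structures.
From mathcomp Require Import all_boot all_order all_algebra.
From mathcomp Require Import all_classical all_reals all_analysis.
Set Implicit Arguments. Unset Strict Implicit. Unset Printing Implicit Defensive.
Import Order.TTheory GRing.Theory Num.Theory.
Local Open Scope classical_set_scope.
Local Open Scope ring_scope.

Section IFS.
Context {R : realType} {L X : metricType R}.

Definition is_chain (w : L -> X -> X) (y : nat -> X) : Prop :=
  forall k : nat, exists lam : L, y k.+1 = w lam (y k).

Definition is_delta_chain (w : L -> X -> X) (delta : R) (x : nat -> X) : Prop :=
  forall k : nat, exists lam : L, mdist (x k.+1) (w lam (x k)) <= delta.

Definition is_finite_delta_chain (w : L -> X -> X) (delta : R) (n : nat)
    (x : nat -> X) : Prop :=
  forall k : nat, (k < n)%N -> exists lam : L, mdist (x k.+1) (w lam (x k)) <= delta.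

Definition shadowing (w : L -> X -> X) : Prop :=
  forall eps : R, 0 < eps -> exists2 delta : R, 0 < delta &
    forall x : nat -> X, is_delta_chain w delta x ->
      exists y : nat -> X, is_chain w y /\ forall k, mdist (x k) (y k) < eps.

Definition finite_shadowing (w : L -> X -> X) : Prop :=
  forall eps : R, 0 < eps -> exists2 delta : R, 0 < delta &
    forall (n : nat) (x : nat -> X), is_finite_delta_chain w delta n x ->
      exists y : nat -> X, is_chain w y /\
        forall k, (k <= n)%N -> mdist (x k) (y k) < eps.
End IFS.

From HB Require Import structures.
From mathcomp Require Import all_boot all_order all_algebra.
From mathcomp Require Import all_classical all_reals all_analysis.
Import Order.TTheory GRing.Theory Num.Theory.
Local Open Scope classical_set_scope.
Local Open Scope ring_scope.

(* Given an infinite delta-chain x, finite shadowing yields for every n a chain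
   Y n that eps/2-shadows x up to time n. Fix an ultrafilter U on nat finer
   than the cofinite filter. By compactness of X and of the parameter space,
   the points Y n k and the parameters used by Y n at time k converge along U;
   continuity of w makes the limit y a chain. For fixed k, almost every n (in
   the sense of U) satisfies k <= n, so d(x k, y k) <= eps/2 < eps. *)

Lemma compact_ultra_cvg (I : Type) (T : topologicalType) (U : set_system I)
    (s : I -> T) :
  UltraFilter U -> compact [set: T] -> exists p : T, s @ U --> p.
Proof.
move=> UU cT; have [p [_ clp]] := cT (s @ U) _ filterT.
exists p => B Bp; have [//|UnB] := in_ultra_setVsetC (s @^-1` B) UU.
by have [z []] := clp (~` B) B UnB Bp.
Qed.

Lemma mdist_cvg_le {R : realType} {X : metricType R} {I : Type}
    {U : set_system I} {FU : ProperFilter U} {s : I -> X} {a p : X} {r : R} :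
  s @ U --> p -> (\forall i \near U, mdist a (s i) < r) -> mdist a p <= r.
Proof.
move=> sp near_r; apply/ler_addgt0Pr => e e0.
have near_p : \forall i \near U, mdist p (s i) < e.
  exact: metricType_numDomainType.cvgr_dist_lt sp _ e0.
have [i [ai pi]] := filter_ex (filterI near_r near_p).
rewrite metric_sym in pi.
exact: le_trans (metric_triangle a (s i) p) (lerD (ltW ai) (ltW pi)).
Qed.

Section chain_limits.
Context {R : realType} {L X : metricType R} (w : L -> X -> X).
Hypotheses (cL : compact [set: L]) (cX : compact [set: X])
  (wc : continuous (fun p : L * X => w p.1 p.2)).

(* The set of chains is closed in X^nat, phrased with ultrafilter limits. *)
Lemma chain_ultra_lim {I : Type} {U : set_system I} (Y : I -> nat -> X) :
  UltraFilter U -> (forall i, is_chain w (Y i)) ->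
  exists2 y : nat -> X, is_chain w y & forall k, (fun i => Y i k) @ U --> y k.
Proof.
move=> UU Ychain.
have /choice [lam Ylam] : forall i, exists lam : nat -> L,
    forall k, Y i k.+1 = w (lam k) (Y i k).
  by move=> i; have [lam lamP] := choice (Ychain i); exists lam.
have /choice [y Yy] : forall k, exists p : X, (fun i => Y i k) @ U --> p.
  by move=> k; exact: compact_ultra_cvg.
have /choice [mu lam_mu] : forall k, exists m : L, (fun i => lam i k) @ U --> m.
  by move=> k; exact: compact_ultra_cvg.
exists y => // k; exists (mu k).
apply: (cvg_unique (@metric_hausdorff _ X) (Yy k.+1)).
have -> : (fun i => Y i k.+1) =
    (fun i => (fun p : L * X => w p.1 p.2) (lam i k, Y i k)).
  by apply: funext => i; rewrite Ylam.
by apply: continuous_cvg (wc (mu k, y k)) _; exact: cvg_pair.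
Qed.

End chain_limits.

Theorem mainTheorem5 (R : realType) (L X : metricType R) (w : L -> X -> X) :
  compact [set: X] -> compact [set: L] ->
  continuous (fun p : L * X => w p.1 p.2) ->
  finite_shadowing w -> shadowing w.
Proof.
move=> cX cL wc fs eps eps0.
have eps2_gt0 : 0 < eps / 2 by rewrite divr_gt0.
have [delta delta0 fs_delta] := fs (eps / 2) eps2_gt0.
exists delta => // x x_delta.
have /choice [Y Y_shadow] : forall n, exists Y : nat -> X, is_chain w Y /\
    forall k, (k <= n)%N -> mdist (x k) (Y k) < eps / 2.
  by move=> n; apply: fs_delta => k _; exact: x_delta.
have [U [UU cofU]] := ultraFilterLemma (F := \oo) _.
have [y ychain Yy] := chain_ultra_lim w cL cX wc Y UU (fun n => (Y_shadow n).1).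
exists y; split => // k.
have shadow_k : \forall n \near U, mdist (x k) (Y n k) < eps / 2.
  by apply: cofU; exists k => // n /= kn; exact: (Y_shadow n).2.
apply: le_lt_trans (mdist_cvg_le (Yy k) shadow_k) _.
by rewrite ltr_pdivrMr// ltr_pMr// ltr1n.
Qed.
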